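(* Let $H$ be a graph on $m\le n$ vertices, regarded as a subgraph of $K_n$ on $m$ of its vertices. If there exists a $(v,k,1)$-design with $k\ge m$ and $v-k\ge n-m$, then \[\operatorname{scp}(K_n-H)\ \le\ \frac{n(v-1)}{k-1}+\operatorname{scp}(\overline{H})-m.\]
   Context: A $(v,k,1)$-design (with $k\ge 2$) is a pair $(P,\mathcal{B})$ where $|P|=v$ and $\mathcal{B}$ is a collection of $k$-subsets of $P$ such that every two distinct points lie in exactly one block. $\overline{H}$ is the complement of $H$ on its own $m$ vertices; $K_n-H$ is obtained from $K_n$ by deleting the edges of $H$. $\operatorname{scp}(G)$ is the minimum, over all families of cliques of $G$ covering each edge exactly once, of the sum of the clique sizes. *)

From mathcomp Require Import all_boot all_order all_algebra.
Set Implicit Arguments. Unset Strict Implicit. Unset Printing Implicit Defensive.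

(* A simple graph on a finite vertex type V is given by a relation e : rel V,
   assumed symmetric and irreflexive where needed. *)

Section Graphs.
Variable V : finType.

Definition is_clique (e : rel V) (C : {set V}) : bool :=
  [forall x in C, forall y in C, (x != y) ==> e x y].

Definition is_clique_partition (e : rel V) (F : {set {set V}}) : bool :=
  [forall C in F, is_clique e C] &&
  [forall x, forall y, e x y ==> (#|[set C in F | (x \in C) && (y \in C)]| == 1)].

Definition cp_weight (F : {set {set V}}) : nat := \sum_(C in F) #|C|.

Lemma clique_partition_exists (e : rel V) :
  symmetric e -> irreflexive e ->
  exists s, [exists F : {set {set V}}, is_clique_partition e F && (cp_weight F == s)].
Proof.
move=> esym eirr.
set F := [set [set x; y] | x in V, y in [pred y | e x y]].
exists (cp_weight F); apply/existsP; exists F; rewrite eqxx andbT.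
apply/andP; split.
  apply/forallP=> C; apply/implyP=> /imset2P [x y _]; rewrite inE => exy ->.
  apply/forallP=> a; apply/implyP; rewrite !inE => /orP [] /eqP ->;
  apply/forallP=> b; apply/implyP; rewrite !inE => /orP [] /eqP ->;
    apply/implyP; rewrite ?eqxx //= => _; rewrite ?exy //; by rewrite esym exy.
apply/forallP=> u; apply/forallP=> w; apply/implyP=> euw.
have uw : u != w by apply: contraTneq euw => ->; rewrite eirr.
apply/cards1P; exists [set u; w]; apply/setP=> C; rewrite !inE.
apply/idP/idP.
  rewrite /F; move=> /and3P [/imset2P [x y _]]; rewrite inE => exy ->.
  rewrite !inE => /orP [] /eqP ? /orP [] /eqP ?; subst;
    by rewrite ?eqxx ?setU1 // in uw *; rewrite setUC.
move/eqP=> ->; rewrite !inE !eqxx orbT /=.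
rewrite andbT /F; apply/imset2P; exists u w; by rewrite ?inE.
Qed.

Definition scp (e : rel V) (esym : symmetric e) (eirr : irreflexive e) : nat :=
  ex_minn (clique_partition_exists esym eirr).

End Graphs.

(* (v,k,1)-design on the point set 'I_v, with block collection B.  We require
   k <= v (blocks are k-subsets of a v-set), excluding the vacuous
   block-free "designs" on v <= 1 points with k > v. *)
Definition is_design (v k : nat) (B : {set {set 'I_v}}) : bool :=
  (2 <= k) && (k <= v) && [forall b in B, #|b| == k] &&
  [forall x, forall y, (x != y) ==> (#|[set b in B | (x \in b) && (y \in b)]| == 1)].

Definition compl_graph (W : finType) (h : rel W) : rel W :=
  fun x y => (x != y) && ~~ h x y.

(* K_n - H, where H lives on 'I_m and is placed on vertices f @: 'I_m of K_n *)
Definition Kn_minus (m n : nat) (f : 'I_m -> 'I_n) (h : rel 'I_m) : rel 'I_n :=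
  fun x y => (x != y) && ~~ [exists i, exists j, [&& f i == x, f j == y & h i j]].

Lemma compl_graph_sym (W : finType) (h : rel W) :
  symmetric h -> symmetric (compl_graph h).
Proof. by move=> hs x y; rewrite /compl_graph eq_sym hs. Qed.

Lemma compl_graph_irr (W : finType) (h : rel W) : irreflexive (compl_graph h).
Proof. by move=> x; rewrite /compl_graph eqxx. Qed.

Lemma Kn_minus_sym m n (f : 'I_m -> 'I_n) (h : rel 'I_m) :
  symmetric h -> symmetric (Kn_minus f h).
Proof.
move=> hs x y; rewrite /Kn_minus eq_sym; congr (_ && ~~ _).
apply/existsP/existsP=> [] [i /existsP [j /and3P [fi fj hij]]];
  exists j; apply/existsP; exists i; by rewrite fi fj hs hij.
Qed.

Lemma Kn_minus_irr m n (f : 'I_m -> 'I_n) (h : rel 'I_m) :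
  irreflexive (Kn_minus f h).
Proof. by move=> x; rewrite /Kn_minus eqxx. Qed.

From mathcomp Require Import all_boot all_order all_algebra.
Set Implicit Arguments. Unset Strict Implicit. Unset Printing Implicit Defensive.

(* Embed K_n into the points of the design so that the m vertices of H go
   into one block b0 and the other n - m vertices outside it.  The traces of
   the blocks b <> b0 are cliques of K_n - H, since two vertices of H already
   lie together in b0; together with an optimal clique partition of the
   complement of H they cover every edge of K_n - H exactly once.  Every point
   lies on r = (v - 1)/(k - 1) blocks, so the traces have total size n r - m. *)

Lemma cards1_mem_unique (T : finType) (S : {set T}) c :
  c \in S -> {in S, forall d, d = c} -> #|S| == 1.
Proof.
move=> cS Sc; apply/cards1P; exists c; apply/setP => d; rewrite inE.
by apply/idP/eqP => [/Sc|->].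
Qed.

Lemma leq_sum_setU (T : finType) (A B : {set T}) (w : T -> nat) :
  \sum_(x in A :|: B) w x <= \sum_(x in A) w x + \sum_(x in B) w x.
Proof.
rewrite (big_mkcond (mem (A :|: B))) (big_mkcond (mem A)) (big_mkcond (mem B)).
rewrite -big_split /=; apply: leq_sum => x _; rewrite inE.
by case: (x \in A); case: (x \in B) => //=; rewrite leq_addr.
Qed.

Lemma leq_sum_imset (T U : finType) (F : T -> U) (P : {set T}) (w : U -> nat) :
  \sum_(y in F @: P) w y <= \sum_(x in P) w (F x).
Proof.
rewrite (partition_big_imset F) /=; apply: leq_sum => y /imsetP [x xP ->].
by rewrite (bigD1 x) /= ?xP ?eqxx // leq_addr.
Qed.

Lemma double_counting (T U : finType) (P : {set T}) (R : T -> U -> bool) :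
  \sum_(t in P) #|[set u | R t u]| = \sum_u #|[set t in P | R t u]|.
Proof.
have card_sum (X : finType) (Q : pred X) : #|[set u | Q u]| = \sum_u (Q u : nat).
  by rewrite -sum1_card big_mkcond; apply: eq_bigr => u _; rewrite inE; case: (Q u).
under eq_bigr do rewrite card_sum.
under [RHS]eq_bigr do rewrite card_sum.
rewrite exchange_big /=; apply: eq_bigr => u _.
by rewrite big_mkcond; apply: eq_bigr => t _; case: (t \in P).
Qed.

Section Transfer.
Variables (T U : finType) (A : {set T}) (b : {set U}) (u0 : U).
Hypothesis leAb : #|A| <= #|b|.

Definition transfer (x : T) : U := nth u0 (enum b) (index x (enum A)).

Lemma transfer_index_lt x : x \in A -> index x (enum A) < size (enum b).
Proof. by move=> xA; rewrite -cardE (leq_trans _ leAb) // cardE index_mem mem_enum. Qed.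

Lemma mem_transfer x : x \in A -> transfer x \in b.
Proof. by move=> xA; rewrite -mem_enum mem_nth // transfer_index_lt. Qed.

Lemma transfer_inj : {in A &, injective transfer}.
Proof.
move=> x y xA yA /eqP; rewrite nth_uniq ?enum_uniq ?transfer_index_lt // => /eqP eq_i.
by have := congr1 (nth x (enum A)) eq_i; rewrite !nth_index ?mem_enum.
Qed.

End Transfer.

Lemma exists_inj_split (T U : finType) (A : {set T}) (b : {set U}) (u0 : U) :
  #|A| <= #|b| -> #|~: A| <= #|~: b| ->
  exists2 g : T -> U, injective g & forall x, (g x \in b) = (x \in A).
Proof.
move=> leAb leAbC.
pose g x := if x \in A then transfer A b u0 x else transfer (~: A) (~: b) u0 x.
have gb x : (g x \in b) = (x \in A).
  rewrite /g; case: ifP => xA; first exact: mem_transfer.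
  by apply/negbTE; rewrite -in_setC mem_transfer // inE xA.
exists g => // x y gxy; have eA : (x \in A) = (y \in A) by rewrite -!gb gxy.
move: gxy; rewrite /g eA; case: ifP => yA; apply: transfer_inj => //;
  by rewrite ?inE ?eA ?yA.
Qed.

Section Designs.
Variables (v k : nat) (B : {set {set 'I_v}}).
Hypothesis desB : @is_design v k B.

Lemma design_card_block b : b \in B -> #|b| = k.
Proof. by case/andP: desB => /andP [_ /forall_inP sizeB] _ bB; exact/eqP/sizeB. Qed.

Lemma design_pair_blocks x y :
  x != y -> #|[set b in B | (x \in b) && (y \in b)]| = 1.
Proof. by case/andP: desB => _ /forallP pairB xy; apply/eqP/(implyP (forallP (pairB x) y)). Qed.

Lemma design_pair_block x y :
  x != y -> exists2 b, b \in B & (x \in b) && (y \in b).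
Proof.
move=> /design_pair_blocks/eqP/cards1P [b eqb].
by have := set11 b; rewrite -eqb inE => /andP [bB xyb]; exists b.
Qed.

Lemma design_pair_block_unique b b' x y : x != y -> b \in B -> b' \in B ->
  x \in b -> y \in b -> x \in b' -> y \in b' -> b = b'.
Proof.
move=> /design_pair_blocks/eqP/cards1P [c eqc] bB b'B xb yb xb' yb'.
have : b \in [set c] by rewrite -eqc inE bB xb yb.
have : b' \in [set c] by rewrite -eqc inE b'B xb' yb'.
by rewrite !inE => /eqP -> /eqP ->.
Qed.

(* Count the pairs (y, b) with y in b, p in b and y <> p in two ways. *)
Lemma design_replication p : #|[set b in B | p \in b]| * (k - 1) = v - 1.
Proof.
have := double_counting B (fun b y => [&& p \in b, y \in b & y != p]).
have -> : \sum_(b in B) #|[set y | [&& p \in b, y \in b & y != p]]|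
          = #|[set b in B | p \in b]| * (k - 1).
  rewrite -sum_nat_const big_mkcond [RHS]big_mkcond; apply: eq_bigr => b _.
  rewrite inE; case bB: (b \in B) => //=; case pb: (p \in b) => /=.
    have -> : [set y | (y \in b) && (y != p)] = b :\ p.
      by apply/setP => y; rewrite !inE andbC.
    by rewrite -(design_card_block bB) (cardsD1 p b) pb add1n subn1.
  by apply/eqP; rewrite cards_eq0; apply/eqP/setP => y; rewrite !inE.
move=> ->; rewrite (bigD1 p) //= (eq_card0 (A := [set b in B | _])); last first.
  by move=> b; rewrite !inE eqxx !andbF.
rewrite add0n (eq_bigr (fun _ => 1)) => [|y yp]; last first.
  rewrite -(design_pair_blocks (x := p) (y := y)) 1?eq_sym //.
  by apply: eq_card => b; rewrite !inE eq_sym yp andbT.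
rewrite sum1dep_card -[in RHS](card_ord v) subn1 -(cardC1 p).
by apply: eq_card => x; rewrite !inE.
Qed.

Lemma design_k_bounds : 1 < k <= v.
Proof. by case/andP: desB => /andP [/andP [k2 kv] _] _; rewrite k2. Qed.

Lemma design_block_exists : exists b, b \in B.
Proof.
have /andP [k2 kv] := design_k_bounds; have v2 : 1 < v := leq_trans k2 kv.
by have [b bB _] := @design_pair_block (Ordinal (ltnW v2)) (Ordinal v2) isT; exists b.
Qed.

Lemma design_sum_preim (T : finType) (g : T -> 'I_v) :
  (\sum_(b in B) #|g @^-1: b|) * (k - 1) = #|T| * (v - 1).
Proof.
rewrite (double_counting B (fun b x => g x \in b)) big_distrl /=.
by rewrite (eq_bigr (fun _ => v - 1)) ?sum_nat_const // => x _; exact: design_replication.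
Qed.

End Designs.

Section ScpMinimality.
Variables (V : finType) (e : rel V) (esym : symmetric e) (eirr : irreflexive e).

Lemma scp_min F : is_clique_partition e F -> scp esym eirr <= cp_weight F.
Proof. by move=> eF; rewrite /scp; case: ex_minnP => s _; apply; apply/existsP; exists F; rewrite eF /=. Qed.

Lemma scp_attained : exists2 F, is_clique_partition e F & cp_weight F = scp esym eirr.
Proof. by rewrite /scp; case: ex_minnP => s /existsP [F /andP [eF /eqP <-]] _; exists F. Qed.

End ScpMinimality.

Section KnMinus.
Variables (m n : nat) (h : rel 'I_m) (f : 'I_m -> 'I_n).
Hypothesis finj : injective f.

Lemma Kn_minus_image i j : Kn_minus f h (f i) (f j) = compl_graph h i j.
Proof.
rewrite /Kn_minus /compl_graph (inj_eq finj); congr (_ && ~~ _).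
apply/existsP/idP => [[i' /existsP [j' /and3P [/eqP/finj -> /eqP/finj -> //]]]|hij].
by exists i; apply/existsP; exists j; rewrite !eqxx.
Qed.

Lemma Kn_minus_off_image x y :
  x != y -> ~~ ((x \in codom f) && (y \in codom f)) -> Kn_minus f h x y.
Proof.
move=> xy; apply: contraNT; rewrite /Kn_minus xy negbK.
by case/existsP => i /existsP [j /and3P [/eqP <- /eqP <- _]]; rewrite !codom_f.
Qed.

Lemma clique_imset C : is_clique (compl_graph h) C -> is_clique (Kn_minus f h) (f @: C).
Proof.
move=> /forall_inP clC; apply/forall_inP => _ /imsetP [i iC ->].
apply/forall_inP => _ /imsetP [j jC ->]; apply/implyP => fij.
rewrite Kn_minus_image; have := forall_inP (clC i iC) j jC.
by move/implyP; apply; apply: contraNneq fij => ->.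
Qed.

End KnMinus.

Section LiftPartition.
Variables (m n v k : nat) (h : rel 'I_m) (f : 'I_m -> 'I_n) (g : 'I_n -> 'I_v).
Variables (B : {set {set 'I_v}}) (b0 : {set 'I_v}).
Hypotheses (finj : injective f) (ginj : injective g).
Hypotheses (desB : @is_design v k B) (b0B : b0 \in B).
Hypothesis g_b0 : forall x, (g x \in b0) = (x \in codom f).

Definition lift_partition (F : {set {set 'I_m}}) : {set {set 'I_n}} :=
  [set g @^-1: b | b : {set _} in B :\ b0] :|: [set f @: C | C : {set _} in F].

(* Two vertices of H are mapped into b0, which is the only block through them. *)
Lemma preim_block_off_image b x y : b \in B :\ b0 -> x != y ->
  g x \in b -> g y \in b -> ~~ ((x \in codom f) && (y \in codom f)).
Proof.
move=> /setD1P [bb0 bB] xy gxb gyb; apply: contra bb0 => /andP [xf yf].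
apply/eqP/(design_pair_block_unique desB (x := g x) (y := g y));
  by rewrite ?(inj_eq ginj) ?g_b0.
Qed.

Lemma clique_preim_block b : b \in B :\ b0 -> is_clique (Kn_minus f h) (g @^-1: b).
Proof.
move=> bB; apply/forall_inP => x; rewrite inE => gxb.
apply/forall_inP => y; rewrite inE => gyb; apply/implyP => xy.
exact/Kn_minus_off_image/(preim_block_off_image bB xy).
Qed.

Section Cover.
Variable F : {set {set 'I_m}}.
Hypothesis cpF : is_clique_partition (compl_graph h) F.

Lemma lift_cover_image i j : compl_graph h i j ->
  #|[set X in lift_partition F | (f i \in X) && (f j \in X)]| == 1.
Proof.
move=> hij; have ij : f i != f j by rewrite (inj_eq finj); case/andP: hij.
have /cards1P [C eqC] := implyP (forallP (forallP (andP cpF).2 i) j) hij.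
have := set11 C; rewrite -eqC inE => /and3P [CF iC jC].
apply: (@cards1_mem_unique _ _ (f @: C)).
  by rewrite !inE !imset_f ?orbT.
move=> X; rewrite !inE => /and3P [/orP [] /imsetP [c cX ->] iX jX].
  rewrite !inE in iX jX.
  by move: (preim_block_off_image cX ij iX jX); rewrite !codom_f.
rewrite !mem_imset // in iX jX.
have : c \in [set C] by rewrite -eqC inE cX iX jX.
by move/set1P ->.
Qed.

Lemma lift_cover_off_image x y : x != y -> ~~ ((x \in codom f) && (y \in codom f)) ->
  #|[set X in lift_partition F | (x \in X) && (y \in X)]| == 1.
Proof.
move=> xy off; have gxy : g x != g y by rewrite (inj_eq ginj).
have [b bB /andP [gxb gyb]] := design_pair_block desB gxy.
have bb0 : b \in B :\ b0.
  by rewrite !inE bB andbT; apply: contra off => /eqP bb0; rewrite -!g_b0 -bb0 gxb.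
apply: (@cards1_mem_unique _ _ (g @^-1: b)).
  by rewrite !inE gxb gyb imset_f.
move=> X; rewrite !inE => /and3P [/orP [] /imsetP [c cX ->] xX yX].
  rewrite !inE in xX yX; case/setD1P: cX => _ cB.
  by rewrite (design_pair_block_unique desB gxy cB bB xX yX gxb gyb).
move: xX yX => /imsetP [i _ xi] /imsetP [j _ yj].
by rewrite xi yj !codom_f in off.
Qed.

Lemma lift_partition_correct : is_clique_partition (Kn_minus f h) (lift_partition F).
Proof.
apply/andP; split.
  apply/forall_inP => X; rewrite inE => /orP [] /imsetP [c cX ->].
    exact: clique_preim_block.
  exact/clique_imset/(forall_inP (andP cpF).1).
apply/forallP => x; apply/forallP => y; apply/implyP => exy.
have [/andP [/codomP [i xi] /codomP [j yj]]|off] :=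
  boolP ((x \in codom f) && (y \in codom f)).
  by rewrite xi yj Kn_minus_image // in exy *; apply: lift_cover_image.
by apply: lift_cover_off_image => //; case/andP: exy.
Qed.

End Cover.

Lemma lift_partition_weight F :
  cp_weight (lift_partition F) + m <= \sum_(b in B) #|g @^-1: b| + cp_weight F.
Proof.
have card_b0 : #|g @^-1: b0| = m.
  by rewrite -[m]card_ord -(card_codom finj); apply: eq_card => x; rewrite inE g_b0.
rewrite (big_setD1 b0) //= card_b0 addnC -addnA leq_add2l.
apply: leq_trans (leq_sum_setU _ _ _) _; apply: leq_add; first exact: leq_sum_imset.
apply: leq_trans (leq_sum_imset _ _ _) (eq_leq _).
by apply: eq_bigr => C _; exact: card_imset.
Qed.

End LiftPartition.

Lemma scp_Kn_minus_design_bound (m n : nat) (h : rel 'I_m) (hsym : symmetric h)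
  (f : 'I_m -> 'I_n) (finj : injective f) (v k : nat) (B : {set {set 'I_v}})
  (desB : @is_design v k B) (hkm : m <= k) (hvk : n - m <= v - k) :
  exists2 S, S * (k - 1) = n * (v - 1) &
    scp (Kn_minus_sym f hsym) (Kn_minus_irr f h) + m
      <= S + scp (compl_graph_sym hsym) (compl_graph_irr h).
Proof.
have [b0 b0B] := design_block_exists desB.
have /andP [k1 kv] := design_k_bounds desB.
have cardA : #|[set x in codom f]| = m by rewrite cardsE card_codom // card_ord.
have [g ginj g_A] : exists2 g : 'I_n -> 'I_v,
    injective g & forall x, (g x \in b0) = (x \in [set x in codom f]).
  apply: exists_inj_split; first exact: Ordinal (leq_trans (ltnW k1) kv).
    by rewrite cardA (design_card_block desB b0B).
  by rewrite [#|~: _|]cardsCs [#|~: b0|]cardsCs !setCK cardA (design_card_block desB b0B) !card_ord.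
have g_b0 x : (g x \in b0) = (x \in codom f) by rewrite g_A inE.
exists (\sum_(b in B) #|g @^-1: b|); first by have := design_sum_preim desB g; rewrite card_ord.
have [F cpF <-] := scp_attained (compl_graph_sym hsym) (compl_graph_irr h).
apply: leq_trans (lift_partition_weight finj b0B g_b0 F); rewrite leq_add2r.
exact/scp_min/(lift_partition_correct finj ginj desB b0B g_b0 cpF).
Qed.

Import Order.TTheory GRing.Theory Num.Theory.
Local Open Scope ring_scope.

Theorem mainTheorem10 (m n : nat) (h : rel 'I_m)
  (hsym : symmetric h) (hirr : irreflexive h)
  (f : 'I_m -> 'I_n) (finj : injective f) (hmn : (m <= n)%N)
  (v k : nat)
  (hdes : exists B : {set {set 'I_v}}, @is_design v k B)
  (hkm : (m <= k)%N) (hvk : (n - m <= v - k)%N) :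
  ((scp (Kn_minus_sym f hsym) (Kn_minus_irr f h))%:R : rat)
    <= (n%:R * (v%:R - 1)) / (k%:R - 1)
       + (scp (compl_graph_sym hsym) (compl_graph_irr h))%:R - m%:R.
Proof.
case: hdes => B desB; have /andP [k1 kv] := design_k_bounds desB.
have [S sum_eq le_scp] := scp_Kn_minus_design_bound hsym finj desB hkm hvk.
have -> : n%:R * (v%:R - 1) / (k%:R - 1) = S%:R :> rat.
  have := congr1 (GRing.natmul (1 : rat)) sum_eq.
  rewrite !natrM !natrB ?(ltnW k1) ?(leq_trans (ltnW k1) kv) // => <-.
  by rewrite mulfK // subr_eq0 gt_eqF // ltr1n.
by rewrite lerBrDr -!natrD ler_nat.
Qed.
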